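(* Let $A\in\mathrm{GL}_{n}(\mathbb{Z})$. If the group $G=\mathbb{Z}^{n}\rtimes_{A}\mathbb{Z}$ admits a length function which is both discrete and purely positive, then $G$ is virtually abelian.
   Context: $\mathbb{Z}^{n}\rtimes_{A}\mathbb{Z}$ is the semidirect product in which a generator of $\mathbb{Z}$ acts on $\mathbb{Z}^n$ by $A$. A length function on a group $G$ is a function $l:G\to[0,\infty)$ such that $l(g^{n})=|n|\,l(g)$ for all $g\in G,n\in\mathbb{Z}$; $l(hgh^{-1})=l(g)$ for all $g,h$; and $l(ab)\leq l(a)+l(b)$ whenever $a,b$ commute. It is purely positive if $l(g)>0$ for every element of infinite order, and discrete if there is $c>0$ with $l(g)>c$ whenever $l(g)\neq 0$. *)

From HB Require Import structures.
From mathcomp Require Import all_boot all_order all_algebra.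
From mathcomp Require Import reals.
Set Implicit Arguments. Unset Strict Implicit. Unset Printing Implicit Defensive.
Import Order.TTheory GRing.Theory Num.Theory.
Local Open Scope ring_scope.

(* The group Z^n ⋊_A Z, elements (v, k) with v : Z^n (column vectors), k : Z,
   product (v,k)(w,m) = (v + A^k w, k + m). *)
Definition SD (n : nat) := ('cV[int]_n * int)%type.

Definition mxpowz (n : nat) (A : 'M[int]_n) (k : int) : 'M[int]_n :=
  match k with
  | Posz m => iter m (mulmx A) 1%:M
  | Negz m => iter m.+1 (mulmx (invmx A)) 1%:M
  end.

Definition sd_one n : SD n := (0, 0).
Definition sd_mul n (A : 'M[int]_n) (x y : SD n) : SD n :=
  (x.1 + mxpowz A x.2 *m y.1, x.2 + y.2).
Definition sd_inv n (A : 'M[int]_n) (x : SD n) : SD n :=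
  (- (mxpowz A (- x.2) *m x.1), - x.2).

Definition sd_pow n (A : 'M[int]_n) (g : SD n) (z : int) : SD n :=
  match z with
  | Posz m => iter m (sd_mul A g) (sd_one n)
  | Negz m => iter m.+1 (sd_mul A (sd_inv A g)) (sd_one n)
  end.

Definition is_length_function (R : realType) n (A : 'M[int]_n) (l : SD n -> R) :=
  [/\ forall g, 0 <= l g,
      forall g (z : int), l (sd_pow A g z) = (absz z)%:R * l g,
      forall g h, l (sd_mul A (sd_mul A h g) (sd_inv A h)) = l g &
      forall a b, sd_mul A a b = sd_mul A b a -> l (sd_mul A a b) <= l a + l b].

Definition infinite_order n (A : 'M[int]_n) (g : SD n) :=
  forall m : nat, (0 < m)%N -> sd_pow A g m <> sd_one n.

Definition purely_positive (R : realType) n (A : 'M[int]_n) (l : SD n -> R) :=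
  forall g, infinite_order A g -> 0 < l g.

Definition discrete_length (R : realType) n (l : SD n -> R) :=
  exists2 c : R, 0 < c & forall g, l g != 0 -> c < l g.

Definition is_subgroup n (A : 'M[int]_n) (H : SD n -> Prop) :=
  [/\ H (sd_one n), forall x y, H x -> H y -> H (sd_mul A x y)
    & forall x, H x -> H (sd_inv A x)].

(* virtually abelian: an abelian subgroup of finite index (finitely many left cosets) *)
Definition virtually_abelian n (A : 'M[int]_n) :=
  exists H : SD n -> Prop,
    [/\ is_subgroup A H,
        forall x y, H x -> H y -> sd_mul A x y = sd_mul A y x &
        exists s : seq (SD n), forall g, exists2 t, t \in s & exists2 h, H h & g = sd_mul A t h].

(** Restricted to the normal subgroup Z^n, a length function is a norm-like
    function [L] that is invariant under [A]; being purely positive and discrete,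
    it satisfies [c < L v] for every non-zero lattice vector [v].  Choose [q] with
    [q c > 2 sum_j L e_j].  By pigeonhole two powers [A^x], [A^y] ([x < y]) agree
    modulo [q]; every column of [A^y - A^x] is then [q u] with
    [q L u <= L (A^y e_j) + L (A^x e_j) = 2 L e_j < q c], so [u = 0].  Hence [A] has
    finite order [N], and [Z^n ⋊ NZ] is an abelian subgroup of index [N]. *)

From HB Require Import structures.
From mathcomp Require Import all_boot all_order all_algebra.
From mathcomp Require Import reals lra.
Set Implicit Arguments. Unset Strict Implicit. Unset Printing Implicit Defensive.
Import Order.TTheory GRing.Theory Num.Theory.
Local Open Scope ring_scope.

Section VectorLength.
Variables (R : realType) (n : nat) (A : 'M[int]_n) (l : SD n -> R).
Hypothesis hl : is_length_function A l.

Definition vlen (v : 'cV[int]_n) := l (v, 0).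

Lemma sd_mul_vec v w : sd_mul A (v, 0) (w, 0) = (v + w, 0).
Proof. by rewrite /sd_mul /= mul1mx addr0. Qed.

Lemma sd_pow_vec v (k : nat) : sd_pow A (v, 0) k = (v *+ k, 0).
Proof. by elim: k => [|k /= ->] //; rewrite sd_mul_vec mulrS. Qed.

Lemma infinite_order_vec v : v != 0 -> infinite_order A (v, 0).
Proof.
move=> v_neq0 m m_gt0; rewrite sd_pow_vec => -[/eqP].
by rewrite -scaler_nat scalemx_eq0 pnatr_eq0 (negPf v_neq0) orbF (gtn_eqF m_gt0).
Qed.

Lemma vlen_mulrn v k : vlen (v *+ k) = k%:R * vlen v.
Proof. by case: hl => _ l_pow _ _; rewrite /vlen -sd_pow_vec l_pow. Qed.

Lemma vlen_opp v : vlen (- v) = vlen v.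
Proof.
case: hl => _ l_pow _ _; have := l_pow (v, 0) (-1).
by rewrite /= /sd_mul /sd_inv /sd_one /= mul1mx mulmx0 !addr0 mul1r.
Qed.

Lemma vlen_add v w : vlen (v + w) <= vlen v + vlen w.
Proof.
case: hl => _ _ _ l_sub; rewrite /vlen -sd_mul_vec.
by apply: l_sub; rewrite !sd_mul_vec addrC.
Qed.

Lemma vlen_sub v w : vlen (v - w) <= vlen v + vlen w.
Proof. by rewrite -(vlen_opp w) vlen_add. Qed.

(* Conjugation by the generator [(0, 1)] of the quotient acts on Z^n as [A]. *)
Lemma vlen_mulmx v : vlen (A *m v) = vlen v.
Proof.
case: hl => _ _ l_conj _; have := l_conj (v, 0) (0, 1).
by rewrite /sd_mul /sd_inv /= !mulmx0 mulmx1 oppr0 mulmx0 !addr0 add0r subrr.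
Qed.

End VectorLength.

Lemma absz_modz_lt (z : int) (q : nat) : (0 < q)%N -> (absz (z %% q)%Z < q)%N.
Proof.
move=> q_gt0; have mod_ge0 : 0 <= (z %% q)%Z by rewrite modz_ge0 // -lt0n.
by rewrite -ltz_nat gez0_abs // ltz_pmod.
Qed.

Lemma mxpow_eqmod_repeat n (A : 'M[int]_n.+1) (q : nat) : (0 < q)%N ->
  exists x y, (x < y)%N /\ forall i j, ((A ^+ x) i j = (A ^+ y) i j %[mod q])%Z.
Proof.
move=> q_gt0; pose T := 'M['I_q]_n.+1.
pose res (k : 'I_#|{: T}|.+1) : T :=
  \matrix_(i, j) Ordinal (absz_modz_lt ((A ^+ k) i j) q_gt0).
have res_eqmod a b : res a = res b ->
    forall i j, ((A ^+ a) i j = (A ^+ b) i j %[mod q])%Z.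
  move=> /matrixP eq_res i j; have /(congr1 val) := eq_res i j.
  rewrite !mxE /= => /(congr1 Posz).
  by rewrite !gez0_abs ?modz_ge0 // -lt0n.
have /injectivePn[a [b a_neq_b /res_eqmod eq_ab]] : ~~ injectiveb res.
  by apply/injectiveP => /leq_card; rewrite card_ord ltnn.
case: (ltngtP a b) => [lt_ab | lt_ba | /val_inj eq_ab']; first by exists a, b.
- by exists b, a; split=> // i j; rewrite eq_ab.
- by rewrite eq_ab' eqxx in a_neq_b.
Qed.

Section FiniteOrder.
Variables (R : archiRealFieldType) (n : nat) (A : 'M[int]_n.+1).
Variables (L : 'cV[int]_n.+1 -> R) (c : R).
Hypothesis c_gt0 : 0 < c.
Hypothesis L_sub : forall v w, L (v - w) <= L v + L w.
Hypothesis L_mulrn : forall v k, L (v *+ k) = k%:R * L v.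
Hypothesis L_mulmx : forall v, L (A *m v) = L v.
Hypothesis L_discrete : forall v, v != 0 -> c < L v.

Lemma discrete_norm_ge0 v : 0 <= L v.
Proof.
have L0 : L 0 = 0 by rewrite -(mulr0n v) L_mulrn mul0r.
by have := L_sub v v; rewrite subrr L0; lra.
Qed.

Lemma discrete_norm_expr_mulmx k v : L (A ^+ k *m v) = L v.
Proof. by elim: k => [|k IHk]; rewrite ?mul1mx // exprS -mulmxE -mulmxA L_mulmx. Qed.

Lemma discrete_norm_dvdz_eq0 (q : nat) (v : 'cV[int]_n.+1) : (0 < q)%N ->
  (forall i, (q%:Z %| v i ord0)%Z) -> L v < q%:R * c -> v = 0.
Proof.
move=> q_gt0 q_dvd Lv_lt; pose u := \col_i (v i ord0 %/ q)%Z.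
have v_eq : v = u *+ q.
  by apply/matrixP => i j; rewrite ord1 mulmxnE mxE -mulr_natr natz divzK.
apply/eqP; apply: contraTT Lv_lt => v_neq0.
have u_neq0 : u != 0 by apply: contraNneq v_neq0 => u0; rewrite v_eq u0 mul0rn.
by rewrite -leNgt v_eq L_mulrn ler_wpM2l ?ler0n // ltW // L_discrete.
Qed.

Lemma discrete_norm_mx_finite_order :
  A \is a GRing.unit -> exists2 N, (0 < N)%N & A ^+ N = 1.
Proof.
move=> A_unit; pose B := \sum_(j < n.+1) L (delta_mx j 0).
have L_delta_le j : L (delta_mx j 0) <= B.
  by rewrite /B (bigD1 j) //= lerDl sumr_ge0 // => i _; apply: discrete_norm_ge0.
pose q := (Num.truncn (2 * B / c)).+1.
have q_gt0 : (0 < q)%N by [].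
have B_lt : 2 * B < q%:R * c by rewrite -ltr_pdivrMr // truncnS_gt.
have [x [y [lt_xy eqmod_xy]]] := mxpow_eqmod_repeat A q_gt0.
have col0 j : col j (A ^+ y - A ^+ x) = 0.
  apply: (discrete_norm_dvdz_eq0 q_gt0) => [k|].
    by rewrite !mxE -eqz_mod_dvd eqmod_xy.
  rewrite colE mulmxBl; apply: le_lt_trans (L_sub _ _) _.
  by rewrite !discrete_norm_expr_mulmx; have := L_delta_le j; lra.
have Axy : A ^+ y = A ^+ x.
  apply/eqP; rewrite -subr_eq0; apply/eqP/matrixP => i j.
  by have /colP/(_ i) := col0 j; rewrite !mxE.
exists (y - x)%N; first by rewrite subn_gt0.
apply: (mulIr (unitrX x A_unit)).
by rewrite -exprD subnK ?(ltnW lt_xy) // Axy mul1r.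
Qed.

End FiniteOrder.

Lemma iter_mulmx_expr n (B : 'M[int]_n.+1) (k : nat) :
  iter k (mulmx B) 1%:M = B ^+ k.
Proof. by elim: k => [|k /= ->]; rewrite ?idmxE // exprS mulmxE. Qed.

Lemma mxpowz_nat n (A : 'M[int]_n.+1) (k : nat) : mxpowz A k = A ^+ k.
Proof. exact: iter_mulmx_expr. Qed.

Lemma mxpowz_negz n (A : 'M[int]_n.+1) (k : nat) : mxpowz A (Negz k) = A ^- k.+1.
Proof. by rewrite -exprVn -iter_mulmx_expr. Qed.

Lemma mxpowz_dvd_order n (A : 'M[int]_n.+1) (N : nat) (k : int) :
  A ^+ N = 1 -> (N%:Z %| k)%Z -> mxpowz A k = 1%:M.
Proof.
move=> AN; have expr_dvd m : (N %| m)%N -> A ^+ m = 1.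
  by move=> /dvdnP[p ->]; rewrite mulnC exprM AN expr1n.
rewrite idmxE; case: k => m N_dvd; first by rewrite mxpowz_nat expr_dvd.
by rewrite mxpowz_negz expr_dvd ?invr1.
Qed.

Lemma mxpowzD_nat n (A : 'M[int]_n) (a b : nat) :
  mxpowz A (a + b)%N = mxpowz A a *m mxpowz A b.
Proof. by elim: a => [|a /= ->]; rewrite ?mul1mx ?mulmxA. Qed.

Lemma virtually_abelian_of_periodic n (A : 'M[int]_n) (N : nat) : (0 < N)%N ->
  (forall k, (N%:Z %| k)%Z -> mxpowz A k = 1%:M) -> virtually_abelian A.
Proof.
move=> N_gt0 A_periodic; pose H (x : SD n) := (N%:Z %| x.2)%Z.
exists H; split.
- split=> [|x y Hx Hy|x Hx]; rewrite /H /= ?dvdz0 ?rpredD //.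
  by rewrite -mulN1r dvdz_mull.
- move=> [v k] [w m] /= Hk Hm.
  by rewrite /sd_mul /= !A_periodic // !mul1mx addrC [m + k]addrC.
- exists [seq (0, Posz r) | r <- iota 0 N] => -[v k].
  have mod_ge0 : 0 <= (k %% N)%Z by rewrite modz_ge0 // -lt0n.
  pose r := absz (k %% N)%Z.
  have r_lt : (r < N)%N by apply: absz_modz_lt.
  exists (0, Posz r); first by rewrite map_f // mem_iota.
  exists (mxpowz A (N - r)%N *m v, k - r%:Z).
    by rewrite /H /= /r gez0_abs // {1}(divz_eq k N) addrK dvdz_mull.
  rewrite /sd_mul mulmxA -mxpowzD_nat subnKC ?(ltnW r_lt) // A_periodic //.
  by rewrite mul1mx add0r addrC subrK.
Qed.

Theorem lemma11 (R : realType) (n : nat) (A : 'M[int]_n) (hA : A \in unitmx) :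
  (exists l : SD n -> R,
     [/\ is_length_function A l, discrete_length l & purely_positive A l]) ->
  virtually_abelian A.
Proof.
case: n A hA => [|n] A hA [l [hl [c c_gt0 l_discrete] l_pos]].
  by apply: (@virtually_abelian_of_periodic _ _ 1) => // k _; rewrite !flatmx0.
have vlen_discrete v : v != 0 -> c < vlen l v.
  by move=> /infinite_order_vec/l_pos/lt0r_neq0/l_discrete.
have [N N_gt0 AN] := discrete_norm_mx_finite_order c_gt0 (vlen_sub hl)
  (vlen_mulrn hl) (vlen_mulmx hl) vlen_discrete hA.
apply: (virtually_abelian_of_periodic N_gt0) => k.
exact: mxpowz_dvd_order.
Qed.
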